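(* Let $k > 0$, let $\mathcal{J} \subseteq \{1,\dots,n\}$ be nonempty, let ${\mathbf{x}}^* = k\sum_{j\in\mathcal{J}} {\mathbf{e}}_j$, and suppose there is a vector ${\mathbf{c}}$ with $$\frac{P {\mathbf{e}}_j}{\| P {\mathbf{e}}_j \|_2} \cdot {\mathbf{c}} = 1 \ \ \forall j \in \mathcal{J}, \qquad \frac{P {\mathbf{e}}_i}{\| P {\mathbf{e}}_i \|_2} \cdot {\mathbf{c}} < 1 \ \ \forall i \in \mathcal{J}^c.$$ Define $g: S \to \mathbb{R}$ by $$g(s) = \min_{0 \leq {\mathbf{x}} \leq s} \| W {\mathbf{x}} \|_1 \quad \text{subject to} \quad A {\mathbf{x}} = A {\mathbf{x}}^*.$$ Then $g$ is non-increasing in $s$, and $$g(s) > \|W{\mathbf{x}}^*\|_1 \ \text{ for } s \in [0,k)\cap S, \qquad g(s) = \|W{\mathbf{x}}^*\|_1 \ \text{ for } s \geq k.$$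
   Context: $A \in \mathbb{R}^{m\times n}$ is a matrix, $A^\dagger$ its Moore–Penrose pseudoinverse, and $P = A^\dagger A$ the orthogonal projection onto $\mathcal{N}(A)^\perp$. ${\mathbf{e}}_1,\dots,{\mathbf{e}}_n$ are the standard unit vectors, assumed not to lie in $\mathcal{N}(A)$, so $w_i := \|P{\mathbf{e}}_i\|_2 > 0$; $W = \mathrm{diag}(w_1,\dots,w_n)$. $S$ is the set of $s \ge 0$ for which there exists ${\mathbf{x}}\in\mathbb{R}^n$ with $0 \le {\mathbf{x}} \le s$ (componentwise) and $A{\mathbf{x}} = A{\mathbf{x}}^*$, i.e., the values of $s$ for which the constraint set defining $g(s)$ is nonempty. *)

From HB Require Import structures.
From mathcomp Require Import all_boot all_order all_algebra.
From mathcomp Require Import classical_sets reals.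
Set Implicit Arguments. Unset Strict Implicit. Unset Printing Implicit Defensive.
Import Order.TTheory GRing.Theory Num.Theory.
Local Open Scope ring_scope.
Local Open Scope classical_set_scope.

(* Moore–Penrose pseudoinverse: Ad is the pseudoinverse of A iff it satisfies
   the four Penrose equations (real case: conjugate transpose = transpose). *)
Definition is_pinv (R : realType) (m n : nat) (A : 'M[R]_(m, n)) (Ad : 'M[R]_(n, m)) : Prop :=
  [/\ A *m Ad *m A = A, Ad *m A *m Ad = Ad,
      (A *m Ad)^T = A *m Ad & (Ad *m A)^T = Ad *m A].

Definition evec (R : realType) (n : nat) (i : 'I_n) : 'cV[R]_n := delta_mx i 0.

Definition dotv (R : realType) (n : nat) (u v : 'cV[R]_n) : R :=
  \sum_(k < n) u k 0 * v k 0.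

Definition norm2 (R : realType) (n : nat) (v : 'cV[R]_n) : R := Num.sqrt (dotv v v).

Definition norm1 (R : realType) (n : nat) (v : 'cV[R]_n) : R := \sum_(k < n) `|v k 0|.

Definition Wmat (R : realType) (n : nat) (P : 'M[R]_n) : 'M[R]_n :=
  diag_mx (\row_(i < n) norm2 (P *m evec R i)).

Definition box (R : realType) (n : nat) (s : R) (x : 'cV[R]_n) : Prop :=
  forall i, 0 <= x i 0 <= s.

Definition feas (R : realType) (m n : nat) (A : 'M[R]_(m, n)) (xs : 'cV[R]_n) (s : R)
  : set 'cV[R]_n := [set x | box s x /\ A *m x = A *m xs].

(* S: the s >= 0 for which the feasible set is nonempty *)
Definition Sset (R : realType) (m n : nat) (A : 'M[R]_(m, n)) (xs : 'cV[R]_n) : set R :=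
  [set s | 0 <= s /\ exists x, feas A xs s x].

(* g(s) = min { ||W x||_1 : 0 <= x <= s, A x = A xs } (written as an infimum;
   the minimum is attained on S) *)
Definition gfun (R : realType) (m n : nat) (A : 'M[R]_(m, n)) (W : 'M[R]_n)
  (xs : 'cV[R]_n) (s : R) : R :=
  inf [set norm1 (W *m x) | x in feas A xs s].

From HB Require Import structures.
From mathcomp Require Import all_boot all_order all_algebra.
From mathcomp Require Import classical_sets reals lra.
Set Implicit Arguments. Unset Strict Implicit. Unset Printing Implicit Defensive.
Import Order.TTheory GRing.Theory Num.Theory.
Local Open Scope ring_scope.
Local Open Scope classical_set_scope.

(* The vector u := P c is a dual certificate.  As P = A^+ A is symmetric with
   A P = A, the value u . x only depends on A x, so it is the same for every
   feasible x; and since u_j = w_j on J and u_i < w_i off J, every feasible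
   x >= 0 has ||W x||_1 = sum_i w_i x_i >= u . x = u . x* = ||W x*||_1.  Feasible
   sets grow with s, so g is non-increasing, and g(s) = ||W x*||_1 as soon as x*
   itself is feasible, i.e. s >= k.  For s < k the part of u . x carried by J is
   at most s sum_J w_j, so a share proportional to k - s sits off J, where a
   uniform ratio (w_i - u_i) / w_i >= eps turns it into a gap in the cost. *)

Section Infimum.
Variables (R : realType) (m n : nat) (A : 'M[R]_(m, n)) (W : 'M[R]_n) (xs : 'cV[R]_n).

Lemma norm1_ge0 (v : 'cV[R]_n) : 0 <= norm1 v.
Proof. exact: sumr_ge0. Qed.

Lemma feas_subset s1 s2 : s1 <= s2 -> feas A xs s1 `<=` feas A xs s2.
Proof.
move=> le12 x [bx Ax]; split=> // i.
by case/andP: (bx i) => -> /= /le_trans; apply.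
Qed.

Lemma gfun_ge s b : feas A xs s !=set0 ->
  (forall x, feas A xs s x -> b <= norm1 (W *m x)) -> b <= gfun A W xs s.
Proof.
move=> [x fx] lb; apply: lb_le_inf; first by exists (norm1 (W *m x)), x.
by move=> _ [y fy <-]; exact: lb.
Qed.

Lemma gfun_le s x : feas A xs s x -> gfun A W xs s <= norm1 (W *m x).
Proof.
move=> fx; apply: ge_inf; last by exists x.
by exists 0 => _ [y _ <-]; exact: norm1_ge0.
Qed.

Lemma gfun_nonincreasing s1 s2 : feas A xs s1 !=set0 -> s1 <= s2 ->
  gfun A W xs s2 <= gfun A W xs s1.
Proof.
move=> ne1 le12; apply: gfun_ge => // x /(feas_subset le12); exact: gfun_le.
Qed.

End Infimum.

Lemma dotvE (R : realType) n (u v : 'cV[R]_n) : dotv u v = (u^T *m v) 0 0.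
Proof. by rewrite /dotv mxE; apply: eq_bigr => i _; rewrite mxE. Qed.

Lemma dotvZl (R : realType) n a (u v : 'cV[R]_n) : dotv (a *: u) v = a * dotv u v.
Proof. by rewrite /dotv mulr_sumr; apply: eq_bigr => i _; rewrite mxE mulrA. Qed.

Lemma dotv_mulmxl (R : realType) n (M : 'M[R]_n) (u v : 'cV[R]_n) :
  dotv (M^T *m u) v = dotv u (M *m v).
Proof. by rewrite !dotvE trmx_mul trmxK mulmxA. Qed.

Lemma dotv_evecl (R : realType) n (i : 'I_n) (v : 'cV[R]_n) : dotv (evec R i) v = v i 0.
Proof. by rewrite dotvE /evec trmx_delta -rowE mxE. Qed.

Lemma norm2_gt0 (R : realType) n (v : 'cV[R]_n) : v != 0 -> 0 < norm2 v.
Proof.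
move=> nz; rewrite /norm2 sqrtr_gt0 lt_def sumr_ge0 ?andbT; last first.
  by move=> i _; rewrite -expr2 sqr_ge0.
apply: contra nz => /eqP v2; apply/eqP/matrixP => i j; rewrite (ord1 j) mxE.
have /eqP : v i 0 * v i 0 = 0.
  by apply: (psumr_eq0P _ v2) => // k _; rewrite -expr2 sqr_ge0.
by rewrite mulf_eq0 orbb => /eqP.
Qed.

Lemma norm1_Wmat (R : realType) n (P : 'M[R]_n) (x : 'cV[R]_n) :
  (forall i, 0 <= x i 0) ->
  norm1 (Wmat P *m x) = \sum_i norm2 (P *m evec R i) * x i 0.
Proof.
move=> x_ge0; apply: eq_bigr => i _; rewrite mul_diag_mx !mxE.
by rewrite ger0_norm // mulr_ge0 ?sqrtr_ge0.
Qed.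

Lemma scale_sum_evecE (R : realType) n (k : R) (J : {set 'I_n}) i :
  (k *: \sum_(j in J) evec R j) i 0 = if i \in J then k else 0.
Proof.
rewrite mxE summxE; case: ifP => iJ; last first.
  by rewrite big1 ?mulr0 // => j jJ; rewrite mxE; case: eqP => // ij; rewrite ij jJ in iJ.
rewrite (bigD1 i) //= big1 ?addr0 ?mxE ?eqxx ?mulr1 // => j /andP[_ ji].
by rewrite mxE eq_sym (negbTE ji).
Qed.

Lemma uniform_ratio_gap (R : realType) (T : finType) (D : pred T) (w u : T -> R) :
  (forall i, D i -> 0 < w i) -> (forall i, D i -> u i < w i) ->
  exists2 eps, 0 < eps & forall i, D i -> eps * w i <= w i - u i.
Proof.
move=> w_gt0 u_lt_w; exists (\big[Num.min/1]_(i | D i) ((w i - u i) / w i)).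
  apply: (big_ind (fun x => 0 < x)) => //; first by move=> a b; rewrite lt_min => ->.
  by move=> i Di; rewrite divr_gt0 ?w_gt0 ?subr_gt0 ?u_lt_w.
move=> i Di; rewrite -ler_pdivlMr ?w_gt0 //.
by rewrite (bigD1 i) //= ge_min lexx.
Qed.

Section Certificate.
Variables (R : realType) (m n : nat) (A : 'M[R]_(m, n)) (Ad : 'M[R]_(n, m)).
Hypothesis hAd : is_pinv A Ad.
Hypothesis hnull : forall i : 'I_n, A *m evec R i != 0.
Variables (J : {set 'I_n}) (c : 'cV[R]_n).
Let P := Ad *m A.
Let w i := norm2 (P *m evec R i).
Let u := P *m c.
Hypothesis hcJ : forall j, j \in J -> dotv ((w j)^-1 *: (P *m evec R j)) c = 1.
Hypothesis hcJc : forall i, i \notin J -> dotv ((w i)^-1 *: (P *m evec R i)) c < 1.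

Lemma weight_gt0 i : 0 < w i.
Proof.
case: hAd => APA _ _ _; apply: norm2_gt0; apply: contra (hnull i) => /eqP Pe0.
by rewrite -APA -(mulmxA A Ad A) -mulmxA [_ *m evec R i]Pe0 mulmx0.
Qed.

Lemma dotv_proj_evec i : dotv ((w i)^-1 *: (P *m evec R i)) c = (w i)^-1 * u i 0.
Proof.
case: hAd => _ _ _ Psym; have PT : P^T = P := Psym.
by rewrite dotvZl -{1}PT dotv_mulmxl dotv_evecl.
Qed.

Lemma cert_supp j : j \in J -> u j 0 = w j.
Proof.
move=> /hcJ; rewrite dotv_proj_evec => /(congr1 (fun t => w j * t)).
by rewrite mulrA divff ?gt_eqF ?weight_gt0 // mul1r mulr1.
Qed.

Lemma cert_offsupp i : i \notin J -> u i 0 < w i.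
Proof.
by move=> /hcJc; rewrite dotv_proj_evec -(ltr_pM2l (weight_gt0 i)) mulrA
  divff ?gt_eqF ?weight_gt0 // mul1r mulr1.
Qed.

Lemma cert_invariant (x y : 'cV[R]_n) : A *m x = A *m y -> dotv u x = dotv u y.
Proof.
case: hAd => _ _ _ Psym Axy; have PT : P^T = P := Psym.
by rewrite /u -PT !dotv_mulmxl /P -!mulmxA Axy.
Qed.

Variable k : R.
Hypothesis hk : 0 < k.
Hypothesis hJ : J != finset.set0.
Let xs := k *: \sum_(j in J) evec R j.
Let W := Wmat P.

Lemma xs_feas s : k <= s -> feas A xs s xs.
Proof.
move=> le_ks; split=> // i; rewrite scale_sum_evecE.
have k_ge0 := ltW hk.
by case: ifP => _; rewrite ?lexx ?k_ge0 ?le_ks ?(le_trans k_ge0 le_ks).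
Qed.

Lemma cost_xs : norm1 (W *m xs) = \sum_(j in J) w j * k.
Proof.
rewrite norm1_Wmat => [|i]; last by rewrite scale_sum_evecE; case: ifP => // _; exact: ltW.
rewrite (bigID (mem J)) /= [X in _ + X]big1 ?addr0 => [|i /negbTE iJ].
  by apply: eq_bigr => j jJ; rewrite scale_sum_evecE jJ.
by rewrite scale_sum_evecE iJ mulr0.
Qed.

Lemma cost_xs_cert : norm1 (W *m xs) = dotv u xs.
Proof.
rewrite cost_xs /dotv [RHS](bigID (mem J)) /= [X in _ + X]big1 ?addr0 => [|i /negbTE iJ].
  by apply: eq_bigr => j jJ; rewrite cert_supp // scale_sum_evecE jJ.
by rewrite scale_sum_evecE iJ mulr0.
Qed.

Lemma cost_split s x : feas A xs s x ->
  [/\ norm1 (W *m x) = \sum_(i in J) w i * x i 0 + \sum_(i | i \notin J) w i * x i 0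
    & norm1 (W *m xs) = \sum_(i in J) w i * x i 0 + \sum_(i | i \notin J) u i 0 * x i 0].
Proof.
move=> [bx Ax]; have x_ge0 i : 0 <= x i 0 by case/andP: (bx i).
split; first by rewrite norm1_Wmat // (bigID (mem J)).
rewrite cost_xs_cert -(cert_invariant Ax) /dotv (bigID (mem J)) /=; congr (_ + _).
by apply: eq_bigr => j jJ; rewrite cert_supp.
Qed.

Lemma cost_ge s x : feas A xs s x -> norm1 (W *m xs) <= norm1 (W *m x).
Proof.
move=> fx; have [-> ->] := cost_split fx; rewrite lerD2l.
apply: ler_sum => i iJ; case: fx => bx _; case/andP: (bx i) => x_ge0 _.
by rewrite ler_wpM2r // ltW ?cert_offsupp.
Qed.

Lemma cost_gap : exists2 d, 0 < d &
  forall s x, feas A xs s x -> norm1 (W *m xs) + d * (k - s) <= norm1 (W *m x).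
Proof.
have [eps eps_gt0 epsP] := uniform_ratio_gap (D := fun i => i \notin J)
  (fun i _ => weight_gt0 i) cert_offsupp.
pose SJ := \sum_(j in J) w j.
have SJ_gt0 : 0 < SJ.
  have [j jJ] := set0Pn _ hJ; rewrite /SJ (bigD1 j) //= ltr_pwDl ?weight_gt0 //.
  by apply: sumr_ge0 => i _; exact/ltW/weight_gt0.
exists (eps * SJ); first exact: mulr_gt0.
move=> s x fx; have [Nx Nxs] := cost_split fx.
case: fx => bx _; have x_ge0 i : 0 <= x i 0 by case/andP: (bx i).
set a := \sum_(i in J) _ in Nx Nxs; set cw := \sum_(i | _) _ in Nx.
set cu := \sum_(i | _) _ in Nxs.
have gap_off : eps * cw <= cw - cu.
  rewrite -sumrB mulr_sumr; apply: ler_sum => i iJ.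
  by rewrite mulrA -mulrBl ler_wpM2r ?epsP.
have cu_le_cw : cu <= cw.
  by apply: ler_sum => i iJ; rewrite ler_wpM2r // ltW ?cert_offsupp.
have mass_J : (k - s) * SJ <= cu.
  have -> : cu = \sum_(j in J) w j * k - a by rewrite -cost_xs Nxs; lra.
  rewrite -sumrB mulrC mulr_suml; apply: ler_sum => j _; rewrite -mulrBr.
  apply: ler_wpM2l; first exact/ltW/weight_gt0.
  by rewrite lerD2l lerN2; case/andP: (bx j).
have : eps * ((k - s) * SJ) <= eps * cw.
  by apply: ler_wpM2l; [exact: ltW | exact: le_trans mass_J cu_le_cw].
by rewrite Nx Nxs mulrA; lra.
Qed.

End Certificate.

Theorem corollary4 (R : realType) (m n : nat) (A : 'M[R]_(m, n)) (Ad : 'M[R]_(n, m))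
  (hAd : is_pinv A Ad)
  (hnull : forall i : 'I_n, A *m evec R i != 0)
  (k : R) (hk : 0 < k) (J : {set 'I_n}) (hJ : J != finset.set0)
  (c : 'cV[R]_n)
  (hcJ : forall j, j \in J ->
     dotv ((norm2 ((Ad *m A) *m evec R j))^-1 *: ((Ad *m A) *m evec R j)) c = 1)
  (hcJc : forall i, i \notin J ->
     dotv ((norm2 ((Ad *m A) *m evec R i))^-1 *: ((Ad *m A) *m evec R i)) c < 1) :
  let P := Ad *m A in
  let W := Wmat P in
  let xs := k *: \sum_(j in J) evec R j in
  let S := Sset A xs in
  let g := gfun A W xs in
  (forall s1 s2, S s1 -> S s2 -> s1 <= s2 -> g s2 <= g s1) /\
  (forall s, S s -> s < k -> norm1 (W *m xs) < g s) /\
  (forall s, k <= s -> g s = norm1 (W *m xs)).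
Proof.
move=> P W xs S g.
have [d d_gt0 gap] := cost_gap hAd hnull hcJ hcJc hk hJ.
split; [|split].
- by move=> s1 s2 [_ ne1] _; exact: gfun_nonincreasing.
- move=> s [_ ne] lt_sk; apply: lt_le_trans (gfun_ge ne (gap s)).
  by rewrite ltrDl mulr_gt0 // subr_gt0.
- move=> s le_ks; have xs_s := xs_feas A J hk le_ks.
  apply/le_anti; rewrite gfun_le //=.
  by apply: gfun_ge => [|x fx]; [exists xs | exact: (cost_ge hAd hnull hcJ hcJc hk fx)].
Qed.
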